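(* Let $(V,g)$ be a Euclidean vector space and $\mathfrak{g}\subseteq\mathfrak{so}(V)$ a Lie subalgebra. Let $V=V_0\oplus\bigoplus_{k=1}^dV_k$ be an orthogonal decomposition where $\mathfrak{g}$ acts trivially on $V_0$ and irreducibly on each $V_k$, $1\le k\le d$. For each $k$ let $\hat V_k=\bigoplus_{j\neq k,\,1\le j\le d}V_j$ and let $\hat{\mathfrak{g}}_k\subseteq\mathfrak{g}$ be the ideal consisting of elements of $\mathfrak{g}$ acting trivially on $\hat V_k$ (regarded as a subalgebra of $\mathfrak{so}(V_k)$). Then $$\Lambda^3V\cap(\Lambda^1V\otimes\mathfrak{g})=\bigoplus_{k=1}^d\Lambda^3V_k\cap(\Lambda^1V_k\otimes\hat{\mathfrak{g}}_k).$$
   Context: $\Lambda^2V$ is identified with $\mathfrak{so}(V)$ via $F\mapsto g(F\cdot,\cdot)$; $\Lambda^3W\cap(\Lambda^1W\otimes\mathfrak{h})=\{T\in\Lambda^3W:X\lrcorner T\in\mathfrak{h}\ \forall X\in W\}$. *)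

From HB Require Import structures.
From mathcomp Require Import all_boot all_order all_algebra.
Set Implicit Arguments. Unset Strict Implicit. Unset Printing Implicit Defensive.
Import Order.TTheory GRing.Theory Num.Theory.
Local Open Scope ring_scope.

(* Conventions:
   - the Euclidean space (V,g) is R^n (row vectors 'rV[R]_n) with the standard
     inner product g(u,v) = (u *m v^T) 0 0;
   - a matrix A : 'M_n acts on row vectors on the right: v |-> v *m A;
   - so(V) = skew matrices (A^T = - A);
   - subspaces are row spaces of matrices (mxalgebra, %MS);
   - a subspace g of 'M_n (Lie subalgebra) is the row space of a matrix
     g : 'M_(m, n*n) via mxvec. *)

Section Defs.
Variables (R : realFieldType) (n : nat).

Definition in_mxsp m (g : 'M[R]_(m, n * n)) (A : 'M[R]_n) : Prop :=
  (mxvec A <= g)%MS.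

Definition tensor3 := {ffun 'I_n * 'I_n * 'I_n -> R}.

Definition is_3form (T : tensor3) : Prop :=
  (forall i j k, T (i, j, k) = - T (j, i, k)) /\
  (forall i j k, T (i, j, k) = - T (i, k, j)).

(* X _| T, as an element of Lambda^2 V identified with so(V) via
   F |-> g(F.,.):  the matrix F with  g(Y *m F, Z) = T(X,Y,Z). *)
Definition contr (X : 'rV[R]_n) (T : tensor3) : 'M[R]_n :=
  \matrix_(j, k) \sum_(i < n) X 0 i * T (i, j, k).

(* Lambda^3 W cap (Lambda^1 W (x) h), for W = V:
   T in Lambda^3 V with X _| T in h for all X in V *)
Definition in_L3_g m (g : 'M[R]_(m, n * n)) (T : tensor3) : Prop :=
  is_3form T /\ forall X : 'rV[R]_n, in_mxsp g (contr X T).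

Definition in_ghat m d (g : 'M[R]_(m, n * n)) (Vk : 'I_d -> 'M[R]_n)
    (k : 'I_d) (A : 'M[R]_n) : Prop :=
  in_mxsp g A /\ forall j : 'I_d, j != k -> Vk j *m A = 0.

(* Lambda^3 V_k cap (Lambda^1 V_k (x) hat g_k), viewed inside Lambda^3 V:
   T is a 3-form on V which only depends on the V_k-components
   (X _| T = 0 for X orthogonal to V_k), and X _| T in hat g_k for X in V_k. *)
Definition in_L3k_ghat m d (g : 'M[R]_(m, n * n)) (Vk : 'I_d -> 'M[R]_n)
    (k : 'I_d) (T : tensor3) : Prop :=
  [/\ is_3form T,
      (forall X : 'rV[R]_n, X *m (Vk k)^T = 0 -> contr X T = 0) &
      (forall X : 'rV[R]_n, (X <= Vk k)%MS -> in_ghat g Vk k (contr X T))].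

End Defs.

From HB Require Import structures.
From mathcomp Require Import all_boot all_order all_algebra.
Import Order.TTheory GRing.Theory Num.Theory.
Set Implicit Arguments. Unset Strict Implicit. Unset Printing Implicit Defensive.
Local Open Scope ring_scope.

(* The argument only uses that g preserves each V_k and kills V_0.
   For T in Lambda^3 V cap (V (x) g) the antisymmetry of T gives
     Y (X _| T) = - X (Y _| T),
   so for X in V_a and Y in V_b the vector Y (X _| T) lies both in V_b (g
   preserves V_b) and in V_a (g preserves V_a); it vanishes when a <> b, and it
   vanishes outright when X lies in V_0.  Hence X _| T, for X in V_k, is
   supported on V_k and acts trivially on the other V_j: the pullback T_k of T
   along the orthogonal projection P_k onto V_k lies in
   Lambda^3 V_k cap (V_k (x) hat g_k), and T = sum_k T_k.  Conversely
   X _| T_k only depends on the V_k-component of X, which gives closure of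
   the sum and uniqueness of the components. *)

Section Contraction.
Variables (R : realFieldType) (n : nat).
Implicit Types (X Y : 'rV[R]_n) (T : tensor3 R n).

Lemma contr0X T : contr 0 T = 0.
Proof. by apply/matrixP=> j k; rewrite !mxE big1 // => i _; rewrite mxE mul0r. Qed.

Lemma contrD X Y T : contr (X + Y) T = contr X T + contr Y T.
Proof.
apply/matrixP=> j k; rewrite !mxE -big_split /=.
by apply: eq_bigr => i _; rewrite mxE mulrDl.
Qed.

Lemma contrZ (a : R) X T : contr (a *: X) T = a *: contr X T.
Proof.
apply/matrixP=> j k; rewrite !mxE mulr_sumr.
by apply: eq_bigr => i _; rewrite mxE mulrA.
Qed.

Lemma contr_sumX (I : finType) (X : I -> 'rV[R]_n) T :
  contr (\sum_i X i) T = \sum_i contr (X i) T.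
Proof.
exact: (big_morph (fun Y => contr Y T) (fun Y Z => contrD Y Z T) (contr0X T)).
Qed.

Lemma contr0T X : contr X (0 : tensor3 R n) = 0.
Proof. by apply/matrixP=> j k; rewrite !mxE big1 // => i _; rewrite ffunE mulr0. Qed.

Lemma contr_sumT d X (Ts : 'I_d -> tensor3 R n) :
  contr X (\sum_(k < d) Ts k) = \sum_(k < d) contr X (Ts k).
Proof.
apply/matrixP=> j l; rewrite !mxE summxE.
under eq_bigr do rewrite sum_ffunE mulr_sumr.
by rewrite exchange_big; apply: eq_bigr => i _; rewrite mxE.
Qed.

Lemma contr_delta (i j k : 'I_n) T : contr (delta_mx 0 i) T j k = T (i, j, k).
Proof.
rewrite mxE (bigD1 i) //= big1 ?addr0; first by rewrite mxE !eqxx mul1r.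
by move=> i' /negbTE ne; rewrite mxE ne andbF mul0r.
Qed.

Lemma tensor3_contr_inj T T' : (forall X, contr X T = contr X T') -> T = T'.
Proof. by move=> eqT; apply/ffunP=> [[[i j] k]]; rewrite -!contr_delta eqT. Qed.

Lemma contr_swap T X Y : is_3form T -> Y *m contr X T = - (X *m contr Y T).
Proof.
case=> T_swap12 _; apply/matrixP=> z l; rewrite !mxE -sumrN.
under eq_bigr do rewrite mxE mulr_sumr.
under [RHS]eq_bigr do rewrite mxE mulr_sumr -sumrN.
rewrite exchange_big; apply: eq_bigr => i _; apply: eq_bigr => j _.
by rewrite (T_swap12 j i l) !mulrN opprK ord1 mulrCA.
Qed.

Lemma contr_skew T X : is_3form T -> (contr X T)^T = - contr X T.
Proof.
case=> _ T_swap23; apply/matrixP=> j l; rewrite !mxE -sumrN.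
by apply: eq_bigr => i _; rewrite T_swap23 mulrN.
Qed.

Lemma sum_3form d (Ts : 'I_d -> tensor3 R n) :
  (forall k, is_3form (Ts k)) -> is_3form (\sum_(k < d) Ts k).
Proof.
move=> Ts3; split=> i j k; rewrite !sum_ffunE -sumrN;
  apply: eq_bigr => l _; have [swap12 swap23] := Ts3 l.
- exact: swap12.
- exact: swap23.
Qed.

(* Pullback of T along the endomorphism v |-> v P, i.e. the 3-tensor
   (X, Y, Z) |-> T (X P, Y P, Z P); it is again a 3-form. *)
Definition pullback (P : 'M[R]_n) T : tensor3 R n :=
  [ffun x => (P *m contr (row x.1.1 P) T *m P^T) x.1.2 x.2].

Lemma contr_pullback P T X : contr X (pullback P T) = P *m contr (X *m P) T *m P^T.
Proof.
rewrite mulmx_sum_row contr_sumX mulmx_sumr mulmx_suml.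
apply/matrixP=> j l; rewrite mxE summxE; apply: eq_bigr => i _.
by rewrite ffunE contrZ -scalemxAr -scalemxAl [RHS]mxE.
Qed.

Lemma pullback_3form P T : is_3form T -> is_3form (pullback P T).
Proof.
move=> T3; split=> i j k; rewrite !ffunE /=.
- have : row j (P *m contr (row i P) T *m P^T) =
         - row i (P *m contr (row j P) T *m P^T).
    by rewrite !row_mul contr_swap // mulNmx.
  by move/rowP/(_ k); rewrite !mxE.
- have : (P *m contr (row i P) T *m P^T)^T = - (P *m contr (row i P) T *m P^T).
    by rewrite !trmx_mul trmxK contr_skew // mulNmx mulmxN mulmxA.
  by move/matrixP/(_ k j); rewrite !mxE.
Qed.

End Contraction.

Lemma orth_submx (F : fieldType) (n m1 m2 p1 p2 : nat)
    (A : 'M[F]_(m1, n)) (B : 'M[F]_(m2, n)) (U : 'M[F]_(p1, n)) (W : 'M[F]_(p2, n)) :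
  (A <= U)%MS -> (B <= W)%MS -> U *m W^T = 0 -> A *m B^T = 0.
Proof.
move=> /submxP[C ->] /submxP[D ->] UW0.
by rewrite trmx_mul mulmxA -(mulmxA C) UW0 mulmx0 mul0mx.
Qed.

Section OrthogonalProjections.
Variables (F : fieldType) (n : nat) (I : finType) (V P : I -> 'M[F]_n).
Hypothesis V_orth : forall a b, a != b -> V a *m (V b)^T = 0.
Hypothesis P_sub : forall a, (P a <= V a)%MS.
Hypothesis P_sum : \sum_a P a = 1%:M.

Lemma proj_decomp p (r : 'M[F]_(p, n)) : r = \sum_a r *m P a.
Proof. by rewrite -mulmx_sumr P_sum mulmx1. Qed.

Lemma proj_decompl p (r : 'M[F]_(n, p)) : r = \sum_a P a *m r.
Proof. by rewrite -mulmx_suml P_sum mul1mx. Qed.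

Lemma proj_sym a : (P a)^T = P a.
Proof.
have PP : P a = P a *m (P a)^T.
  rewrite -[LHS]mulmx1 -trmx1 -P_sum raddf_sum mulmx_sumr (bigD1 a) //=.
  rewrite big1 ?addr0 // => b ba; apply: orth_submx (P_sub a) (P_sub b) _.
  by apply: V_orth; rewrite eq_sym.
by rewrite PP trmx_mul trmxK.
Qed.

Lemma proj_kill a b p (r : 'M[F]_(p, n)) :
  (r <= V a)%MS -> b != a -> r *m P b = 0.
Proof.
move=> ra ba; rewrite -proj_sym; apply: orth_submx ra (P_sub b) _.
by apply: V_orth; rewrite eq_sym.
Qed.

Lemma proj_fix a p (r : 'M[F]_(p, n)) : (r <= V a)%MS -> r *m P a = r.
Proof.
move=> ra; rewrite [RHS]proj_decomp (bigD1 a) //= big1 ?addr0 // => b.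
exact: proj_kill.
Qed.

Lemma proj_orth a p (r : 'M[F]_(p, n)) : r *m (V a)^T = 0 -> r *m P a = 0.
Proof.
move=> rV0; rewrite -proj_sym; have /submxP[C ->] := P_sub a.
by rewrite trmx_mul mulmxA rV0 mul0mx.
Qed.

Lemma proj_residual a p (r : 'M[F]_(p, n)) : (r - r *m P a) *m (V a)^T = 0.
Proof. by rewrite mulmxBl -mulmxA -[P a]proj_sym -trmx_mul proj_fix ?subrr. Qed.

Lemma blocks_meet0 a b p (r : 'M[F]_(p, n)) :
  (r <= V a)%MS -> (r <= V b)%MS -> a != b -> r = 0.
Proof. by move=> ra rb ab; rewrite -(proj_fix rb) (proj_kill ra) // eq_sym. Qed.

End OrthogonalProjections.

Lemma orth_proj_exists (F : fieldType) (n : nat) (I : finType) (V : I -> 'M[F]_n) :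
  row_full (\sum_a V a)%MS ->
  exists P : I -> 'M[F]_n, (forall a, (P a <= V a)%MS) /\ \sum_a P a = 1%:M.
Proof.
move/(submx_full 1%:M)/sub_sumsmxP=> [u u_sum].
by exists (fun a => u a *m V a); split=> [a|]; [exact: submxMl | rewrite u_sum].
Qed.

Section Decomposition.
Variables (R : realFieldType) (n m d : nat) (g : 'M[R]_(m, n * n)).
Variables (V0 : 'M[R]_n) (Vk : 'I_d -> 'M[R]_n).
Hypothesis V_orth0 : forall k, V0 *m (Vk k)^T = 0.
Hypothesis V_orth : forall k l, k != l -> Vk k *m (Vk l)^T = 0.
Hypothesis g_triv0 : forall A, in_mxsp g A -> V0 *m A = 0.
Hypothesis Vk_inv : forall k A, in_mxsp g A -> (Vk k *m A <= Vk k)%MS.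

(* All summands in one family: V_0 at index ord0, V_k at index lift ord0 k. *)
Definition block (a : 'I_d.+1) : 'M[R]_n :=
  if unlift ord0 a is Some k then Vk k else V0.

Lemma block0 : block ord0 = V0.
Proof. by rewrite /block unlift_none. Qed.

Lemma blockS k : block (lift ord0 k) = Vk k.
Proof. by rewrite /block liftK. Qed.

Lemma block_orth a b : a != b -> block a *m (block b)^T = 0.
Proof.
case: (unliftP ord0 a) => [k ->|->]; case: (unliftP ord0 b) => [l ->|->];
  rewrite ?blockS ?block0 ?eqxx // => ab.
- by apply: V_orth; rewrite (inj_eq lift_inj) in ab.
- by apply: trmx_inj; rewrite trmx_mul trmxK V_orth0 trmx0.
Qed.

Lemma block_full : row_full (V0 + \sum_k Vk k)%MS -> row_full (\sum_a block a)%MS.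
Proof.
by move=> full; rewrite big_ord_recl block0; under eq_bigr do rewrite blockS.
Qed.

Lemma block_inv a p (Y : 'M[R]_(p, n)) A :
  in_mxsp g A -> (Y <= block a)%MS -> (Y *m A <= block a)%MS.
Proof.
move=> gA; case: (unliftP ord0 a) => [k ->|->]; rewrite ?blockS ?block0.
- by move=> Yk; apply: submx_trans (Vk_inv k gA); apply: submxMr.
- by move=> /submxP[D ->]; rewrite -mulmxA g_triv0 // mulmx0 sub0mx.
Qed.

Variable P : 'I_d.+1 -> 'M[R]_n.
Hypothesis P_sub : forall a, (P a <= block a)%MS.
Hypothesis P_sum : \sum_a P a = 1%:M.

Lemma proj_lift_sub p k (r : 'M[R]_(p, n)) : (r *m P (lift ord0 k) <= Vk k)%MS.
Proof. by rewrite -blockS; apply: submx_trans (submxMl _ _) (P_sub _). Qed.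

Lemma L3g_contr_V0 T (X : 'rV[R]_n) : in_L3_g g T -> (X <= V0)%MS -> contr X T = 0.
Proof.
case=> T3 Tg /submxP[D ->]; apply/row_matrixP=> j.
by rewrite row0 rowE contr_swap // -mulmxA g_triv0 ?mulmx0 ?oppr0.
Qed.

Lemma L3g_contr_mixed T (X Y : 'rV[R]_n) a b : in_L3_g g T ->
  (X <= block a)%MS -> (Y <= block b)%MS -> a != b -> Y *m contr X T = 0.
Proof.
case=> T3 Tg Xa Yb ab.
apply: (blocks_meet0 block_orth P_sub P_sum (a := a) (b := b)) ab.
- by rewrite contr_swap // eqmx_opp; apply: block_inv.
- exact: block_inv.
Qed.

Lemma L3g_contr_block k T (X : 'rV[R]_n) : in_L3_g g T -> (X <= Vk k)%MS ->
  P (lift ord0 k) *m contr X T *m P (lift ord0 k) = contr X T.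
Proof.
move=> TL Xk; set k' := lift ord0 k; set C := contr X T.
have C_other b : b != k' -> P b *m C = 0.
  move=> bk; apply/row_matrixP=> j; rewrite row0 row_mul.
  apply: (L3g_contr_mixed TL (a := k') (b := b)); first by rewrite blockS.
  - exact: submx_trans (row_sub j _) (P_sub b).
  - by rewrite eq_sym.
have PC : P k' *m C = C.
  by rewrite [RHS](proj_decompl P_sum) (bigD1 k') //= big1 ?addr0.
have CP : C *m P k' = C.
  apply: trmx_inj; rewrite trmx_mul (proj_sym block_orth P_sub P_sum).
  by rewrite contr_skew ?mulmxN ?PC //; case: TL.
by rewrite PC CP.
Qed.

Lemma pullback_in_L3k k T : in_L3_g g T ->
  in_L3k_ghat g Vk k (pullback (P (lift ord0 k)) T).
Proof.
move=> TL; have [T3 Tg] := TL; have P_symm := proj_sym block_orth P_sub P_sum.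
split=> [|X XVk0|X Xk]; first exact: pullback_3form.
- rewrite contr_pullback (proj_orth block_orth P_sub P_sum) ?blockS //.
  by rewrite contr0X mulmx0 mul0mx.
- have XP : X *m P (lift ord0 k) = X.
    by apply: (proj_fix block_orth P_sub P_sum); rewrite blockS.
  rewrite contr_pullback P_symm XP L3g_contr_block //.
  split=> [|j jk]; first exact: Tg.
  have VjP : Vk j *m P (lift ord0 k) = 0.
    apply: (proj_kill block_orth P_sub P_sum (a := lift ord0 j)).
      by rewrite blockS.
    by rewrite (inj_eq lift_inj) eq_sym.
  by rewrite -(L3g_contr_block TL Xk) !mulmxA VjP !mul0mx.
Qed.

Lemma L3g_decomp T : in_L3_g g T -> T = \sum_k pullback (P (lift ord0 k)) T.
Proof.
move=> TL; apply: tensor3_contr_inj => X; rewrite contr_sumT.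
rewrite {1}(proj_decomp P_sum X) big_ord_recl contrD contr_sumX.
rewrite (L3g_contr_V0 TL) ?add0r; last first.
  by rewrite -block0; apply: submx_trans (submxMl _ _) (P_sub _).
apply: eq_bigr => k _; rewrite contr_pullback (proj_sym block_orth P_sub P_sum).
by rewrite L3g_contr_block // proj_lift_sub.
Qed.

Lemma L3k_contr_proj k Tk (X : 'rV[R]_n) : in_L3k_ghat g Vk k Tk ->
  contr X Tk = contr (X *m P (lift ord0 k)) Tk.
Proof.
case=> _ Tk_vanish _; rewrite -{1}(subrK (X *m P (lift ord0 k)) X) contrD.
rewrite Tk_vanish ?add0r // -blockS.
exact: (proj_residual block_orth P_sub P_sum).
Qed.

Lemma sum_L3k_in_L3g (Ts : 'I_d -> tensor3 R n) :
  (forall k, in_L3k_ghat g Vk k (Ts k)) -> in_L3_g g (\sum_k Ts k).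
Proof.
move=> TsL; split; first by apply: sum_3form => k; case: (TsL k).
move=> X; rewrite contr_sumT /in_mxsp linear_sum; apply: summx_sub => k _.
rewrite (L3k_contr_proj X (TsL k)).
by case: (TsL k) => _ _ /(_ _ (proj_lift_sub k X)) [].
Qed.

Lemma L3k_sum_unique (Ts : 'I_d -> tensor3 R n) :
  (forall k, in_L3k_ghat g Vk k (Ts k)) -> \sum_k Ts k = 0 -> forall k, Ts k = 0.
Proof.
move=> TsL Ts_sum0 k; apply: tensor3_contr_inj => X.
rewrite contr0T (L3k_contr_proj X (TsL k)).
have := congr1 (contr (X *m P (lift ord0 k))) Ts_sum0.
rewrite contr_sumT contr0T (bigD1 k) //= big1 ?addr0 // => l lk.
case: (TsL l) => _ Tl_vanish _; apply: Tl_vanish.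
apply: orth_submx (proj_lift_sub k X) (submx_refl (Vk l)) _.
by apply: V_orth; rewrite eq_sym.
Qed.
End Decomposition.

Unset Implicit Arguments.

Theorem proposition3p1 (R : realFieldType) (n m d : nat)
  (g : 'M[R]_(m, n * n)) (V0 : 'M[R]_n) (Vk : 'I_d -> 'M[R]_n)
  (g_skew : forall A : 'M[R]_n, in_mxsp g A -> A^T = - A)
  (g_bracket : forall A B : 'M[R]_n, in_mxsp g A -> in_mxsp g B ->
      in_mxsp g (A *m B - B *m A))
  (V_full : row_full (V0 + \sum_(k < d) Vk k)%MS)
  (V_orth0 : forall k : 'I_d, V0 *m (Vk k)^T = 0)
  (V_orth : forall k l : 'I_d, k != l -> Vk k *m (Vk l)^T = 0)
  (g_triv0 : forall A : 'M[R]_n, in_mxsp g A -> V0 *m A = 0)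
  (Vk_nz : forall k : 'I_d, Vk k != 0)
  (Vk_inv : forall (k : 'I_d) (A : 'M[R]_n), in_mxsp g A ->
      (Vk k *m A <= Vk k)%MS)
  (Vk_irr : forall (k : 'I_d) (W : 'M[R]_n), (W <= Vk k)%MS ->
      (forall A : 'M[R]_n, in_mxsp g A -> (W *m A <= W)%MS) ->
      W = 0 \/ (Vk k <= W)%MS) :
  (forall T : tensor3 R n,
     in_L3_g g T <->
     exists Ts : 'I_d -> tensor3 R n,
       (forall k, in_L3k_ghat g Vk k (Ts k)) /\ T = \sum_(k < d) Ts k)
  /\
  (forall Ts : 'I_d -> tensor3 R n,
     (forall k, in_L3k_ghat g Vk k (Ts k)) ->
     \sum_(k < d) Ts k = 0 -> forall k, Ts k = 0).
Proof.
have [P [P_sub P_sum]] := orth_proj_exists (block_full V_full).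
split=> [T|]; last exact: (L3k_sum_unique V_orth0 V_orth P_sub P_sum).
split=> [TL | [Ts [TsL ->]]].
- exists (fun k => pullback (P (lift ord0 k)) T); split.
  + move=> k.
    exact: (pullback_in_L3k V_orth0 V_orth g_triv0 Vk_inv P_sub P_sum k TL).
  + exact: (L3g_decomp V_orth0 V_orth g_triv0 Vk_inv P_sub P_sum TL).
- exact: (sum_L3k_in_L3g V_orth0 V_orth P_sub P_sum TsL).
Qed.
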